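(* SeqPAV satisfies $\kappa$-group representation for $\kappa(\alpha,\lambda)=\lceil \frac{2(\lambda+1)^2}{\alpha^2}\rceil$. That is, for every rational $\alpha\in(0,1]$, every $\lambda\in\mathbb N$, every profile $P$, every ranking $r$ that SeqPAV may output on $P$ (under any tie-breaking), and every group $N'$ that is $(\alpha,\lambda)$-significant in $P$, we have $\mathrm{avg}(N',r_{\le k})\ge\lambda$ where $k=\lceil \frac{2(\lambda+1)^2}{\alpha^2}\rceil$.
   Context: Let $N=[n]$ be a finite set of voters and $A$ a finite set of $m$ alternatives; a profile $P=(A_1,\dots,A_n)$ gives each voter $i$ a non-empty approval set $A_i\subseteq A$. A ranking $r=(r_1,\dots,r_m)$ is a linear order of $A$, $r_{\le k}=\{r_1,\dots,r_k\}$, with $r_{\le k}=A$ for $k\ge m$. For nonempty $N'\subseteq N$ and $S\subseteq A$, $\mathrm{avg}(N',S)=\frac1{|N'|}\sum_{i\in N'}|A_i\cap S|$. The cohesiveness of $N'$ is $\lambda(N')=|\bigcap_{i\in N'}A_i|$; $N'$ is $(\alpha,\lambda)$-significant in $P$ if $|N'|=\lceil\alpha n\rceil$ and $\lambda(N')\ge\lambda$. For a weight vector $\mathbf w=(w_1,w_2,\dots)$ of nonnegative reals and $S\subseteq A$, let $w(S)=\sum_{i\in N}\sum_{j=1}^{|A_i\cap S|}w_j$. The rule $\mathbf w$-RAV builds $r$ iteratively from the empty ranking: at step $k\in[m]$ it appends an unranked alternative $a$ maximizing $w(r_{\le k-1}\cup\{a\})-w(r_{\le k-1})$ (ties broken arbitrarily).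 SeqPAV is $\mathbf w$-RAV with $\mathbf w=(1,\frac12,\frac13,\dots)$. *)

From HB Require Import structures.
From mathcomp Require Import all_boot all_order all_algebra.
Set Implicit Arguments. Unset Strict Implicit. Unset Printing Implicit Defensive.
Import Order.TTheory GRing.Theory Num.Theory.
Local Open Scope ring_scope.

Definition profile (n : nat) (A : finType) := 'I_n -> {set A}.

Definition valid_profile n (A : finType) (P : profile n A) : Prop :=
  forall i : 'I_n, P i != set0.

(* a ranking is a linear order of A, represented as a duplicate-free list
   enumerating A; r_{<=k} is the set of its first k entries (all of A if k >= m) *)
Definition is_ranking (A : finType) (r : seq A) : Prop := perm_eq r (enum A).

Definition prefix_set (A : finType) (r : seq A) (k : nat) : {set A} :=
  [set x in take k r].

Definition avg n (A : finType) (P : profile n A) (N' : {set 'I_n}) (S : {set A}) : rat :=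
  (\sum_(i in N') (#|P i :&: S|)%:R) / (#|N'|)%:R.

Definition cohesiveness n (A : finType) (P : profile n A) (N' : {set 'I_n}) : nat :=
  #|\bigcap_(i in N') P i|.

Definition significant n (A : finType) (P : profile n A) (alpha : rat) (lambda : nat)
  (N' : {set 'I_n}) : Prop :=
  (#|N'|)%:Z = Num.ceil (alpha * n%:R) /\ (lambda <= cohesiveness P N')%N.

(* w(S) = sum_i sum_{j=1}^{|A_i cap S|} w_j  (weights indexed from 1) *)
Definition wscore n (A : finType) (w : nat -> rat) (P : profile n A) (S : {set A}) : rat :=
  \sum_(i < n) \sum_(1 <= j < (#|P i :&: S|).+1) w j.

(* r is a possible output of w-RAV on P (for some tie-breaking): at each step k
   (0-indexed here), the appended alternative r_k maximizes the marginal gain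
   among the unranked alternatives. *)
Definition wRAV_output n (A : finType) (w : nat -> rat) (P : profile n A) (r : seq A) : Prop :=
  is_ranking r /\
  forall (k : nat) (a : A), (k < size r)%N -> a \notin take k r ->
    wscore w P (prefix_set r k :|: [set a]) - wscore w P (prefix_set r k)
    <= wscore w P (prefix_set r k :|: [set nth a r k]) - wscore w P (prefix_set r k).

Definition pav_weights (j : nat) : rat := (j%:R)^-1.

Definition seqPAV_output n (A : finType) (P : profile n A) (r : seq A) : Prop :=
  wRAV_output pav_weights P r.

From HB Require Import structures.
From mathcomp Require Import all_boot all_order all_algebra.
From mathcomp Require Import ring lra.
Set Implicit Arguments. Unset Strict Implicit. Unset Printing Implicit Defensive.
Import Order.TTheory GRing.Theory Num.Theory.
Local Open Scope ring_scope.

(* If the alternatives approved by all of N' already lie in r_{<=k}, each member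
   of N' approves at least lambda of them there.  Otherwise some such c is still
   unranked after k steps, so at each of these steps SeqPAV gained at least the
   PAV gain of c, which by convexity of 1/x is at least L := |N'| / (avg + 1),
   avg being taken on r_{<=k}.  The potential sum_i (2 - 2 / (|A_i :&: S| + 1))
   is at most 2n and grows by at least L^2 / n per step, hence
   k |N'|^2 <= 2 n^2 (avg + 1)^2; together with |N'| >= alpha n and
   k >= 2 (lambda + 1)^2 / alpha^2 this forces avg >= lambda. *)

Lemma card_setIU1 (A : finType) (Q S : {set A}) (a : A) : a \notin S ->
  #|Q :&: (S :|: [set a])| = (#|Q :&: S| + (a \in Q))%N.
Proof.
move=> aS; rewrite setIUr; have [aQ|aQ] := boolP (a \in Q).
  rewrite (_ : Q :&: [set a] = [set a]); last by apply/setIidPr; rewrite sub1set.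
  by rewrite setUC cardsU1 !inE (negbTE aS) andbF addnC.
rewrite (_ : Q :&: [set a] = set0) ?setU0 ?addn0 //.
by apply/setP => y; rewrite !inE; case: eqP => [->|]; rewrite ?(negbTE aQ) ?andbF.
Qed.

Lemma wscore_gain n (A : finType) (P : profile n A) (w : nat -> rat)
  (S : {set A}) (a : A) : a \notin S ->
  wscore w P (S :|: [set a]) - wscore w P S =
  \sum_(i < n) (if a \in P i then w (#|P i :&: S|).+1 else 0).
Proof.
move=> aS; rewrite /wscore -sumrB; apply: eq_bigr => i _.
rewrite card_setIU1 //; case: (a \in P i); last by rewrite addn0 subrr.
by rewrite addn1 big_nat_recr //= addrAC subrr add0r.
Qed.

Section Prefix.
Variables (A : finType) (r : seq A).

Lemma prefix_set_subset t k : (t <= k)%N -> prefix_set r t \subset prefix_set r k.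
Proof.
by move=> tk; apply/subsetP => y; rewrite !inE -(take_takel _ tk); apply: mem_take.
Qed.

Lemma prefix_setS x0 t : (t < size r)%N ->
  prefix_set r t.+1 = prefix_set r t :|: [set nth x0 r t].
Proof.
move=> tr; apply/setP => y.
by rewrite /prefix_set (take_nth x0 tr) !inE mem_rcons in_cons orbC.
Qed.

Lemma prefix_set_oversize k : (size r <= k)%N -> prefix_set r k = [set x in r].
Proof. by move=> rk; apply/setP => y; rewrite !inE take_oversize. Qed.

Lemma nth_notin_prefix_set x0 t : uniq r -> (t < size r)%N ->
  nth x0 r t \notin prefix_set r t.
Proof. by move=> r_uniq tr; rewrite inE in_take ?mem_nth // index_uniq // ltnn. Qed.

End Prefix.

Lemma inv_ge_tangent (R : realFieldType) (a b : R) : 0 < a -> 0 < b ->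
  2 / b - a / b ^+ 2 <= a^-1.
Proof.
move=> a0 b0.
have -> : 2 / b - a / b ^+ 2 = a^-1 - (b - a) ^+ 2 / (a * b ^+ 2).
  by field; rewrite ?gt_eqF.
by rewrite lerBlDr lerDl divr_ge0 ?sqr_ge0 ?mulr_ge0 ?sqr_ge0 ?ltW.
Qed.

Lemma sum_inv_ge (R : realFieldType) (I : finType) (J : {set I}) (y : I -> R) :
  (0 < #|J|)%N -> (forall i, i \in J -> 0 < y i) ->
  #|J|%:R ^+ 2 / \sum_(i in J) y i <= \sum_(i in J) (y i)^-1.
Proof.
move=> J0 y0; set Y := \sum_(i in J) y i; set s : R := #|J|%:R.
have s0 : 0 < s by rewrite ltr0n.
have Y0 : 0 < Y.
  have [i0 i0J] := card_gt0P J0.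
  rewrite /Y (bigD1 i0) //= ltr_pwDl ?y0 // sumr_ge0 // => i /andP[iJ _].
  exact/ltW/y0.
set b := Y / s; have b0 : 0 < b by rewrite divr_gt0.
apply: (@le_trans _ _ (\sum_(i in J) (2 / b - y i / b ^+ 2))); last first.
  by apply: ler_sum => i iJ; apply: inv_ge_tangent; rewrite ?y0.
rewrite sumrB sumr_const -[_ *+ #|J|]mulr_natr -mulr_suml -/Y -/s.
suff -> : 2 / b * s - Y / b ^+ 2 = s ^+ 2 / Y by [].
by rewrite /b; field; rewrite ?gt_eqF.
Qed.

Definition pav_potential (m : nat) : rat := 2 - 2 / m.+1%:R.

Lemma pav_potential_ge0 m : 0 <= pav_potential m.
Proof.
by rewrite subr_ge0 ler_pdivrMr ?ltr0Sn // ler_peMr // ler1n.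
Qed.

Lemma pav_potential_le2 m : pav_potential m <= 2.
Proof. by rewrite lerBlDr lerDl divr_ge0. Qed.

(* The increment 2 / ((m+1)(m+2)) dominates the squared weight w := (m+1)^-1,
   and 2 u w - u^2 <= w^2. *)
Lemma pav_potential_incr m (b : bool) (u : rat) :
  2 * u * (if b then m.+1%:R^-1 else 0) - u ^+ 2 <=
  pav_potential (m + b) - pav_potential m.
Proof.
case: b; last by rewrite addn0 subrr mulr0 sub0r oppr_le0 sqr_ge0.
rewrite /pav_potential addn1 -[m.+2%:R]natr1.
have : 1 <= m.+1%:R :> rat by rewrite ler1n.
move: (m.+1%:R) => y y1; have y0 : 0 < y by apply: lt_le_trans y1.
have -> : 2 - 2 / (y + 1) - (2 - 2 / y) = y^-1 ^+ 2 + (y - 1) / (y * y * (y + 1)).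
  by field; rewrite ?gt_eqF // ltr_wpDr // ltW.
apply: ler_wpDr; first by rewrite divr_ge0 ?subr_ge0 // !mulr_ge0 ?addr_ge0 ?ltW.
by move: (sqr_ge0 (y^-1 - u)); move: (y^-1) => z; nra.
Qed.

Section PavGain.
Variables (n : nat) (A : finType) (P : profile n A).

Definition pav_gain (S : {set A}) (a : A) : rat :=
  \sum_(i < n) (if a \in P i then pav_weights (#|P i :&: S|).+1 else 0).

Definition pav_potential_set (S : {set A}) : rat :=
  \sum_(i < n) pav_potential #|P i :&: S|.

Lemma pav_potential_set_ge0 S : 0 <= pav_potential_set S.
Proof. by apply: sumr_ge0 => i _; apply: pav_potential_ge0. Qed.

Lemma pav_potential_set_le S : pav_potential_set S <= 2 * n%:R.
Proof.
rewrite mulr_natr -[n in 2 *+ n]card_ord -sumr_const.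
by apply: ler_sum => i _; apply: pav_potential_le2.
Qed.

Lemma pav_potential_set_incr (S : {set A}) (a : A) (u : rat) : a \notin S ->
  2 * u * pav_gain S a - u ^+ 2 *+ n <=
  pav_potential_set (S :|: [set a]) - pav_potential_set S.
Proof.
move=> aS; rewrite /pav_potential_set -sumrB mulr_sumr.
rewrite -[n in u ^+ 2 *+ n]card_ord -sumr_const -sumrB; apply: ler_sum => i _.
rewrite card_setIU1 //; have := pav_potential_incr #|P i :&: S| (a \in P i) u.
by case: (a \in P i).
Qed.

Lemma pav_gain_along_prefixes (r : seq A) (x0 : A) (k : nat) (L : rat) :
  (0 < n)%N -> uniq r -> (k <= size r)%N -> 0 <= L ->
  (forall t, (t < k)%N -> L <= pav_gain (prefix_set r t) (nth x0 r t)) ->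
  k%:R * L ^+ 2 <= 2 * n%:R ^+ 2.
Proof.
move=> n0 r_uniq kr L0 gainL; have nR0 : 0 < n%:R :> rat by rewrite ltr0n.
pose Phi t := pav_potential_set (prefix_set r t).
have Phi_incr t : (t < k)%N -> Phi t + L ^+ 2 / n%:R <= Phi t.+1.
  move=> tk; have tr := leq_trans tk kr; set u := L / n%:R.
  rewrite addrC -lerBrDr /Phi (prefix_setS x0 tr).
  apply: le_trans (pav_potential_set_incr u (nth_notin_prefix_set x0 r_uniq tr)).
  have -> : L ^+ 2 / n%:R = 2 * u * L - u ^+ 2 *+ n.
    by rewrite -mulr_natr /u; field; rewrite gt_eqF.
  by rewrite lerD2r ler_wpM2l ?gainL // mulr_ge0 // divr_ge0 // ltW.
have Phi_lb t : (t <= k)%N -> t%:R * (L ^+ 2 / n%:R) <= Phi t.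
  elim: t => [|t IH] tk; first by rewrite mul0r pav_potential_set_ge0.
  by apply: le_trans (Phi_incr t tk); rewrite -natr1 mulrDl mul1r lerD2r IH // ltnW.
have := le_trans (Phi_lb k (leqnn k)) (pav_potential_set_le _).
by rewrite mulrA ler_pdivrMr // -mulrA -expr2.
Qed.

Lemma avg_ge0 (N' : {set 'I_n}) (S : {set A}) : 0 <= avg P N' S.
Proof. by rewrite divr_ge0 ?sumr_ge0. Qed.

Lemma cohesiveness_le_avg (N' : {set 'I_n}) (S : {set A}) :
  (0 < #|N'|)%N -> \bigcap_(i in N') P i \subset S ->
  (cohesiveness P N')%:R <= avg P N' S.
Proof.
move=> N'0 CS; rewrite /avg ler_pdivlMr ?ltr0n // mulr_natr -sumr_const.
by apply: ler_sum => i iN; rewrite ler_nat subset_leq_card // subsetI CS bigcap_inf.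
Qed.

Lemma pav_gain_cohesive (N' : {set 'I_n}) (S T : {set A}) (c : A) :
  (0 < #|N'|)%N -> c \in \bigcap_(i in N') P i -> S \subset T ->
  #|N'|%:R / (avg P N' T + 1) <= pav_gain S c.
Proof.
move=> N'0 cN' ST; set s := #|N'|; have s0 : 0 < s%:R :> rat by rewrite ltr0n.
have avg1 : 0 < avg P N' T + 1 by rewrite ltr_wpDl ?avg_ge0.
have sumE : \sum_(i in N') (#|P i :&: T|.+1)%:R = s%:R * (avg P N' T + 1).
  rewrite /avg mulrDr mulr1 [s%:R * _]mulrC divfK ?gt_eqF //.
  by under eq_bigr do rewrite -addn1 natrD; rewrite big_split sumr_const.
apply: (@le_trans _ _ (\sum_(i in N') (#|P i :&: T|.+1)%:R^-1)).
  have := @sum_inv_ge rat _ _ (fun i => (#|P i :&: T|.+1)%:R) N'0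
    (fun i _ => ltr0Sn _ _).
  rewrite sumE; have -> // : s%:R ^+ 2 / (s%:R * (avg P N' T + 1)) =
    s%:R / (avg P N' T + 1).
  by field; rewrite !gt_eqF.
apply: (@le_trans _ _ (\sum_(i in N') (#|P i :&: S|.+1)%:R^-1)).
  apply: ler_sum => i _; rewrite lef_pV2 ?posrE ?ltr0Sn // ler_nat ltnS.
  by rewrite subset_leq_card // setIS.
rewrite /pav_gain [X in _ <= X](bigID (mem N')) /= -[X in X <= _]addr0; apply: lerD.
  by apply: ler_sum => i iN; rewrite (bigcapP cN' i iN).
by apply: sumr_ge0 => i _; case: ifP => // _; rewrite invr_ge0 ler0n.
Qed.

End PavGain.

Lemma round_count_ler (R : realFieldType) (alpha l B s m k : R) :
  0 < alpha -> 0 < m -> alpha * m <= s -> 0 < B ->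
  2 * l ^+ 2 / alpha ^+ 2 <= k -> k * (s / B) ^+ 2 <= 2 * m ^+ 2 -> l <= B.
Proof.
move=> a0 m0 ams B0 kl kb; rewrite leNgt; apply/negP => Bl.
have l0 : 0 < l := lt_trans B0 Bl.
have am0 : 0 < alpha * m by rewrite mulr_gt0.
have ratio_lt : alpha * m / l < s / B.
  apply: (@lt_le_trans _ _ (alpha * m / B)); first by rewrite ltr_pM2l // ltf_pV2.
  by rewrite ler_wpM2r // invr_ge0 ltW.
have sqr_lt : (alpha * m / l) ^+ 2 < (s / B) ^+ 2.
  by rewrite ltr_pXn2r // nnegrE ltW // divr_gt0 // (lt_le_trans am0).
move: kb; apply/negP; rewrite -ltNge.
have -> : 2 * m ^+ 2 = 2 * l ^+ 2 / alpha ^+ 2 * (alpha * m / l) ^+ 2.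
  by field; rewrite !gt_eqF.
apply: (@lt_le_trans _ _ (2 * l ^+ 2 / alpha ^+ 2 * (s / B) ^+ 2)).
  by rewrite ltr_pM2l // divr_gt0 ?mulr_gt0 ?exprn_gt0.
by apply: ler_wpM2r; rewrite ?sqr_ge0.
Qed.

Lemma seqPAV_gain_max n (A : finType) (P : profile n A) r t (a : A) :
  seqPAV_output P r -> (t < size r)%N -> a \notin prefix_set r t ->
  pav_gain P (prefix_set r t) a <= pav_gain P (prefix_set r t) (nth a r t).
Proof.
case=> r_perm r_step tr aS.
have r_uniq : uniq r by rewrite (perm_uniq r_perm) enum_uniq.
have := r_step t a tr; rewrite -[a \in take t r]in_set.
by rewrite !wscore_gain ?nth_notin_prefix_set //; apply.
Qed.

Theorem theorem4 (n : nat) (A : finType) (P : profile n A) (r : seq A)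
  (alpha : rat) (lambda : nat) (N' : {set 'I_n}) (k : nat) :
  (0 < n)%N ->
  valid_profile P ->
  0 < alpha -> alpha <= 1 ->
  seqPAV_output P r ->
  significant P alpha lambda N' ->
  k%:Z = Num.ceil (2 * (lambda.+1)%:R ^+ 2 / alpha ^+ 2) ->
  lambda%:R <= avg P N' (prefix_set r k).
Proof.
move=> n0 _ a0 _ seqPAV [card_N' coh_N'] k_ceil.
have [r_perm _] := seqPAV.
have r_uniq : uniq r by rewrite (perm_uniq r_perm) enum_uniq.
have s_ge : alpha * n%:R <= #|N'|%:R.
  by have := ceil_ge (alpha * n%:R); rewrite -card_N'.
have N'0 : (0 < #|N'|)%N.
  by rewrite -(ltr0n rat) (lt_le_trans _ s_ge) ?mulr_gt0 ?ltr0n.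
have k_ge : 2 * lambda.+1%:R ^+ 2 / alpha ^+ 2 <= k%:R.
  by have := ceil_ge (2 * lambda.+1%:R ^+ 2 / alpha ^+ 2); rewrite -k_ceil.
have [covered|/subsetPn [c cC c_new]] :=
  boolP (\bigcap_(i in N') P i \subset prefix_set r k).
  by apply: le_trans (cohesiveness_le_avg N'0 covered); rewrite ler_nat.
have kr : (k <= size r)%N.
  apply: contraNT c_new; rewrite -ltnNge => /ltnW/prefix_set_oversize ->.
  by rewrite inE (perm_mem r_perm) mem_enum.
rewrite -(lerD2r 1) natr1.
apply: (round_count_ler a0 _ s_ge _ k_ge); rewrite ?ltr0n ?ltr_wpDl ?avg_ge0 //.
apply: (pav_gain_along_prefixes (x0 := c) n0 r_uniq kr) => [|t tk].
  by rewrite divr_ge0 ?addr_ge0 ?avg_ge0.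
have c_new_t : c \notin prefix_set r t.
  by apply: contra c_new; apply/subsetP/prefix_set_subset/ltnW.
apply: le_trans (seqPAV_gain_max seqPAV (leq_trans tk kr) c_new_t).
exact/pav_gain_cohesive/prefix_set_subset/ltnW.
Qed.
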